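(* A finite noncyclic group $G$ has the property that the poset $C(G)$ of its cyclic subgroups possesses exactly one breaking point if and only if $G$ is a generalized quaternion $2$-group $Q_{2^n}$ for some $n\geq 3$.
   Context: For a finite group $G$, $C(G)$ denotes the set of cyclic subgroups of $G$, partially ordered by inclusion. A breaking point of $C(G)$ is a subgroup $H\in C(G)$ with $H\neq 1$ and $H\neq G$ such that for every $X\in C(G)$ we have $X\leq H$ or $H\leq X$. For $n\geq 3$, the generalized quaternion $2$-group is $Q_{2^n}=\langle a,b \mid a^{2^{n-2}}=b^2,\ a^{2^{n-1}}=1,\ b^{-1}ab=a^{-1}\rangle$, of order $2^n$. *)

From HB Require Import structures.
From mathcomp Require Import all_boot all_fingroup all_solvable.
Set Implicit Arguments. Unset Strict Implicit. Unset Printing Implicit Defensive.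
Local Open Scope group_scope.

Definition cyclic_subgroups (gT : finGroupType) (G : {set gT}) : {set {set gT}} :=
  [set H : {set gT} | (H \subset G) && cyclic H].

Definition breaking_point (gT : finGroupType) (G H : {set gT}) : bool :=
  [&& H \in cyclic_subgroups G, H != 1, H != G &
      [forall X in cyclic_subgroups G, (X \subset H) || (H \subset X)]].

Definition breaking_points (gT : finGroupType) (G : {set gT}) : {set {set gT}} :=
  [set H : {set gT} | breaking_point G H].

From HB Require Import structures.
From mathcomp Require Import all_boot all_fingroup all_solvable.

Set Implicit Arguments. Unset Strict Implicit. Unset Printing Implicit Defensive.

(* A breaking point H of C(G) contains every element of prime order: otherwise
   H would be a proper nontrivial subgroup of a group of prime order. Hence
   'Ohm_1(G) <= H; comparing H with the cyclic groups generated by the p- and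
   p'-parts of elements of G shows that G is a p-group, and then 'Ohm_1(G) is
   the unique subgroup of order p of the cyclic p-group H. A p-group with a
   unique subgroup of order p is cyclic or generalized quaternion. Conversely,
   in a generalized quaternion group 'Ohm_1(G) has order 2 and lies in every
   nontrivial subgroup, so it is a breaking point; any larger breaking point
   would contain all the elements of order 4 outside the maximal cyclic
   subgroup <x>, hence all of G. *)

Section BreakingPoints.

Local Open Scope group_scope.

Variables (gT : finGroupType) (G : {group gT}).
Implicit Types H K : {group gT}.

Lemma Ohm1_sub_nontrivial K :
  prime #|'Ohm_1(G)| -> K \subset G -> K :!=: 1 -> 'Ohm_1(G) \subset K.
Proof.
move=> pr_Ohm1 sKG ntK; have sOKG := OhmS 1 sKG.
have ntOK : #|'Ohm_1(K)| != 1%N by rewrite -trivg_card1 Ohm1_eq1.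
have defOK : 'Ohm_1(K) = 'Ohm_1(G).
  by apply/eqP; rewrite eqEcard sOKG (prime_nt_dvdP pr_Ohm1 ntOK _) ?cardSg ?leqnn.
by rewrite -defOK Ohm_sub.
Qed.

Lemma Ohm1_breaking_point :
  prime #|'Ohm_1(G)| -> 'Ohm_1(G) != G -> breaking_point G 'Ohm_1(G).
Proof.
move=> pr_Ohm1 neOG; rewrite /breaking_point inE Ohm_sub prime_cyclic //= neOG.
rewrite trivg_card1 gtn_eqF ?prime_gt1 //=.
apply/forall_inP=> X /[!inE] /andP[sXG /cyclicP[g defX]].
rewrite {X}defX in sXG *.
have [-> | ntg] := eqVneq <[g]> 1; first by rewrite sub1G.
by rewrite (Ohm1_sub_nontrivial pr_Ohm1 sXG ntg) orbT.
Qed.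

Lemma breaking_point_proper_cycle H g :
  breaking_point G H -> g \in G -> g \notin H -> H \proper <[g]>.
Proof.
case/and4P=> _ _ _ /forall_inP cmpH Gg notHg.
have /orP[|sHg] : (<[g]> \subset H) || (H \subset <[g]>).
- by apply: cmpH; rewrite inE cycle_subG Gg cycle_cyclic.
- by rewrite cycle_subG (negPf notHg).
by rewrite properE sHg cycle_subG.
Qed.

Lemma breaking_point_prime_elt H g :
  breaking_point G H -> g \in G -> prime #[g] -> g \in H.
Proof.
move=> bpH Gg pr_g; apply: contraT => /(breaking_point_proper_cycle bpH Gg) ltHg.
have ntH : #|H| != 1%N by case/and4P: bpH => _; rewrite -trivg_card1.
have /(prime_nt_dvdP pr_g ntH) oH := cardSg (proper_sub ltHg).
by have := proper_card ltHg; rewrite -orderE oH ltnn.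
Qed.

Lemma Ohm1_sub_breaking_point H : breaking_point G H -> 'Ohm_1(G) \subset H.
Proof.
move=> bpH; rewrite Ohm1Eprime gen_subG; apply/subsetP=> x /[!inE] /andP[Gx pr_x].
exact: breaking_point_prime_elt bpH Gx pr_x.
Qed.

Lemma breaking_point_pgroup H : breaking_point G H -> (pdiv #|H|).-group H.
Proof.
move=> bpH; case/and4P: (bpH) => /[!inE] /andP[sHG _] ntH neHG _.
have [g Gg notHg] : exists2 g, g \in G & g \notin H.
  by apply/subsetPn; apply: contra neHG => sGH; rewrite eqEsubset sHG.
set p := pdiv #|H|.
have pr_p : prime p by rewrite pdiv_prime // ltnNge -trivg_card_le1.
have G_constt pi : g.`_pi \in G by rewrite groupX.
have sub_cycle pi : g.`_pi \notin H -> H \subset <[g.`_pi]>.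
  by move/(breaking_point_proper_cycle bpH (G_constt pi))/proper_sub.
have [Hgp | notHgp] := boolP (g.`_p \in H); last first.
  exact: pgroupS (sub_cycle p notHgp) (p_elt_constt p g).
have notHgp' : g.`_p^' \notin H.
  by apply: contra notHg => Hgp'; rewrite -(consttC p g) groupM.
have /pgroupP/(_ p pr_p (pdiv_dvd _)) := pgroupS (sub_cycle _ notHgp') (p_elt_constt p^' g).
by rewrite !inE eqxx.
Qed.

Lemma pgroup_of_breaking_point H : breaking_point G H -> (pdiv #|H|).-group G.
Proof.
move=> bpH; apply/pgroupP=> q pr_q qG; have [x Gx ox] := Cauchy pr_q qG.
have Hx : x \in H by apply: breaking_point_prime_elt bpH Gx _; rewrite ox.
apply: (pgroupP (breaking_point_pgroup bpH)) => //.
by rewrite -ox order_dvdG.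
Qed.

Lemma breaking_point_quaternion H :
  breaking_point G H -> ~~ cyclic G -> extremal_class G = Quaternion.
Proof.
move=> bpH ncG; case/and4P: (bpH) => /[!inE] /andP[sHG cH] ntH _ _.
set p := pdiv #|H|; have pH : p.-group H := breaking_point_pgroup bpH.
have pG : p.-group G := pgroup_of_breaking_point bpH.
have ntG : G :!=: 1 by apply: contra ncG => /eqP->; rewrite cyclic1.
have sOH := Ohm1_sub_breaking_point bpH.
have defOhm : 'Ohm_1(G) = 'Ohm_1(H).
  apply/eqP; rewrite eqEsubset (OhmS 1 sHG) andbT.
  by rewrite -{1}Ohm_id OhmS.
have /(prime_Ohm1P pG ntG) : #|'Ohm_1(G)| = p.
  by rewrite defOhm (Ohm1_cyclic_pgroup_prime cH pH ntH).
by rewrite (negPf ncG) => /andP[_ /eqP].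
Qed.

Lemma quaternion_breaking_points :
  extremal_class G = Quaternion -> breaking_points G = [set 'Ohm_1(G)].
Proof.
move=> /quaternion_classP[n n_gt2 isoG].
have [[x y] genG _] := generators_quaternion n_gt2 isoG.
have [[_ ord4 _] _ [defZ oZ _ [defOhm _] _] _ _] :=
  quaternion_structure n_gt2 genG isoG.
have [oG Gx _ X'y] := genG; have [Gy notXy] := setDP X'y.
have [_ _ _ defXY _] := extremal_generators_facts (isT : prime 2) genG.
have oOhm : #|'Ohm_1(G)| = 2 by rewrite defOhm -defZ oZ.
have pr_Ohm1 : prime #|'Ohm_1(G)| by rewrite oOhm.
have neOG : 'Ohm_1(G) != G.
  by rewrite eqEcard Ohm_sub oOhm oG -ltnNge -{1}(expn1 2) ltn_exp2l // ltnW.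
apply/setP=> H; rewrite !inE; apply/idP/eqP=> [bpH | ->]; last first.
  exact: Ohm1_breaking_point.
have /cyclicP[h defH] : cyclic H by case/and4P: bpH => /[!inE] /andP[].
rewrite {H}defH in bpH *; apply/eqP.
rewrite eq_sym eqEcard Ohm1_sub_breaking_point // oOhm leqNgt; apply/negP=> gt2H.
have X'_sub t : t \in G :\: <[x]> -> t \in <[h]>.
  move=> X't; have [Gt _] := setDP X't.
  apply: contraT => /(breaking_point_proper_cycle bpH Gt) ltHt.
  have := cardSg (proper_sub ltHt); have := proper_card ltHt.
  rewrite -orderE ord4 //; move: gt2H; case: #|_| => [|[|[|[|[]]]]] //.
have Hy := X'_sub y X'y.
have Hx : x \in <[h]>.
  by rewrite -(groupMr x Hy) X'_sub // inE groupMl ?cycle_id // notXy groupM.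
case/and4P: bpH => /[!inE] /andP[sHG _] _ /negP[].
by rewrite eqEsubset sHG -defXY mulG_subG !cycle_subG Hx Hy.
Qed.

End BreakingPoints.

Theorem corollary2p2 (gT : finGroupType) (G : {group gT}) :
  ~~ cyclic G ->
  (#|breaking_points G| = 1 <-> exists2 n, 3 <= n & G \isog 'Q_(2 ^ n)).
Proof.
move=> ncG; split=> [bp1 | isoQ]; last first.
  by rewrite quaternion_breaking_points ?cards1 //; apply/quaternion_classP.
have [H] : exists H, H \in breaking_points G by apply/card_gt0P; rewrite bp1.
rewrite inE => bpH; apply/quaternion_classP.
have /cyclicP[h defH] : cyclic H by case/and4P: bpH => /[!inE] /andP[].
by rewrite {H}defH in bpH; apply: breaking_point_quaternion bpH ncG.
Qed.
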